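(* Let $I$ be a monomial ideal of $R=K[x_1,\ldots,x_d]$ ($K$ a field), and write its Newton polyhedron as $NP(I)=\{\mathbf{x}\in\mathbb{R}^d_+\mid \mathbf{a}_i\cdot\mathbf{x}\ge c_i \text{ for } 1\le i\le s\}$ with $\mathbf{a}_i\in\mathbb{N}^d$, $c_i\in\mathbb{N}$, $\gcd(\mathbf{a}_{i1},\ldots,\mathbf{a}_{id},c_i)=1$, where for each $i$ the set $F_i=\{\mathbf{x}\in NP(I)\mid \mathbf{a}_i\cdot\mathbf{x}=c_i\}$ is a facet of $NP(I)$, and $F_1,\ldots,F_s$ are the facets of $NP(I)$. For $r\in\mathbb{R}_+$ the following are equivalent: (1) $r$ is a jumping number for $I$; (2) for some $1\le i\le s$ with $c_i\neq0$ there exists a lattice point $\mathbf{p}\in r\cdot F_i\cap\mathbb{N}^d$; (3) for some $1\le i\le s$ with $c_i\neq0$ there exists $\mathbf{x}\in\mathbb{N}^d$ with $\mathbf{a}_i\cdot\mathbf{x}=rc_i$ and $\mathbf{a}_j\cdot\mathbf{x}\ge rc_j$ for all $1\le j\le s$, $j\neq i$.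
   Context: $\mathbb{R}_+$ denotes the non-negative reals, $\mathbb{N}$ the non-negative integers, and $\mathbf{x}^{\mathbf{a}}=x_1^{a_1}\cdots x_d^{a_d}$. $NP(I)$ is the convex hull in $\mathbb{R}^d$ of $\{\mathbf{a}\in\mathbb{N}^d\mid \mathbf{x}^{\mathbf{a}}\in I\}$ (a lattice polyhedron). Scaling means $r\cdot NP(I)=\{\mathbf{x}\in\mathbb{R}^d_+\mid \mathbf{a}_i\cdot\mathbf{x}\ge rc_i,\ 1\le i\le s\}$ and $r\cdot F_i=\{\mathbf{x}\in r\cdot NP(I)\mid \mathbf{a}_i\cdot\mathbf{x}=rc_i\}$. For real $t\ge0$, the $t$-th real power is $\overline{I^t}=(\{\mathbf{x}^{\mathbf{a}}\mid \mathbf{a}\in t\cdot NP(I)\cap\mathbb{N}^d\})$, and $\overline{I^{>r}}=\bigcup_{t>r}\overline{I^t}$. A jumping number for $I$ is a real $r\ge0$ with $\overline{I^r}\neq\overline{I^{>r}}$. *)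

From HB Require Import structures.
From mathcomp Require Import all_boot all_order all_algebra.
From mathcomp Require Import reals.
From mathcomp Require Import mpoly.

Set Implicit Arguments.
Unset Strict Implicit.
Unset Printing Implicit Defensive.

Import Order.TTheory GRing.Theory Num.Theory.
Local Open Scope ring_scope.

Definition is_ideal (K : fieldType) (d : nat) (J : {mpoly K[d]} -> Prop) :=
  [/\ J 0,
      (forall p q, J p -> J q -> J (p + q)) &
      (forall p q, J q -> J (p * q))].

Definition ideal_gen (K : fieldType) (d : nat) (G : {mpoly K[d]} -> Prop)
  (p : {mpoly K[d]}) : Prop :=
  forall J, is_ideal J -> (forall g, G g -> J g) -> J p.

Definition monomial_ideal (K : fieldType) (d : nat) (I : {mpoly K[d]} -> Prop) :=
  is_ideal I /\
  exists A : 'X_{1..d} -> Prop,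
    forall p, I p <-> ideal_gen (fun q => exists2 m, A m & q = 'X_[m]) p.

Definition dotr (R : realType) (d : nat) (u x : 'I_d -> R) : R :=
  \sum_(j < d) u j * x j.

Definition exp_vec (R : realType) (d : nat) (m : 'X_{1..d}) : 'I_d -> R :=
  fun j => (m j)%:R.
Arguments exp_vec R {d} m.

Definition conv_hull (R : realType) (d : nat) (S : ('I_d -> R) -> Prop)
  (x : 'I_d -> R) : Prop :=
  exists n (pts : 'I_n -> 'I_d -> R) (lam : 'I_n -> R),
    [/\ (forall k, S (pts k)), (forall k, 0 <= lam k), \sum_(k < n) lam k = 1 &
        forall j, x j = \sum_(k < n) lam k * pts k j].

Definition NP (R : realType) (K : fieldType) (d : nat) (I : {mpoly K[d]} -> Prop) :
  ('I_d -> R) -> Prop :=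
  conv_hull (fun v => exists2 m : 'X_{1..d}, I 'X_[m] & v = exp_vec R m).
Arguments NP R {K d} I.

Definition dilate (R : realType) (d : nat) (t : R) (P : ('I_d -> R) -> Prop)
  (x : 'I_d -> R) : Prop :=
  exists2 y, P y & forall j, x j = t * y j.

Definition aff_indep (R : realType) (d n : nat) (pts : 'I_n.+1 -> 'I_d -> R) :=
  forall lam : 'I_n -> R,
    (forall j, \sum_(i < n) lam i * (pts (lift ord0 i) j - pts ord0 j) = 0) ->
    forall i, lam i = 0.

Definition dim_ge (R : realType) (d : nat) (S : ('I_d -> R) -> Prop) (k : nat) :=
  exists2 pts : 'I_k.+1 -> 'I_d -> R, (forall i, S (pts i)) & aff_indep pts.

Definition aff_dim (R : realType) (d : nat) (S : ('I_d -> R) -> Prop) (k : nat) :=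
  dim_ge S k /\ ~ dim_ge S k.+1.

Definition is_face (R : realType) (d : nat) (P F : ('I_d -> R) -> Prop) :=
  exists (al : 'I_d -> R) (be : R),
    (forall x, P x -> be <= dotr al x) /\
    (forall x, F x <-> P x /\ dotr al x = be).

Definition is_facet (R : realType) (d : nat) (P F : ('I_d -> R) -> Prop) :=
  is_face P F /\ exists k, aff_dim P k.+1 /\ aff_dim F k.

Definition real_pow (R : realType) (K : fieldType) (d : nat)
  (I : {mpoly K[d]} -> Prop) (t : R) : {mpoly K[d]} -> Prop :=
  ideal_gen (fun q => exists2 m : 'X_{1..d},
                 dilate t (NP R I) (exp_vec R m) & q = 'X_[m]).

Definition real_pow_gt (R : realType) (K : fieldType) (d : nat)
  (I : {mpoly K[d]} -> Prop) (r : R) : {mpoly K[d]} -> Prop :=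
  fun p => exists2 t : R, r < t & real_pow I t p.

Definition jumping_number (R : realType) (K : fieldType) (d : nat)
  (I : {mpoly K[d]} -> Prop) (r : R) : Prop :=
  0 <= r /\ ~ (forall p, real_pow I r p <-> real_pow_gt I r p).

(* NP(I) = {x in R^d_+ | a_i . x >= c_i}, as in the paper:             *)
(*   r . NP(I) = {x in R^d_+ | a_i . x >= r c_i, 1 <= i <= s}          *)
(*   r . F_i   = {x in r . NP(I) | a_i . x = r c_i}                    *)

Definition nat_vec (R : realType) (d : nat) (v : 'I_d -> nat) : 'I_d -> R :=
  fun j => (v j)%:R.
Arguments nat_vec R {d} v.

Definition scaled_NP (R : realType) (d s : nat) (a : 'I_s -> 'I_d -> nat)
  (c : 'I_s -> nat) (r : R) (x : 'I_d -> R) : Prop :=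
  (forall j, 0 <= x j) /\ (forall k, r * (c k)%:R <= dotr (nat_vec R (a k)) x).

Definition scaled_facet (R : realType) (d s : nat) (a : 'I_s -> 'I_d -> nat)
  (c : 'I_s -> nat) (r : R) (i : 'I_s) (x : 'I_d -> R) : Prop :=
  scaled_NP a c r x /\ dotr (nat_vec R (a i)) x = r * (c i)%:R.

(** The ideal generated by monomials contains x^m exactly when some generator
    x^b divides it, and for t > 0 the dilate t NP(I) is cut out by the scaled
    inequalities a_i . x >= t c_i.  Hence a lattice point m of r NP(I) lies in
    some t NP(I) with t > r unless it satisfies an inequality with c_i <> 0 with
    equality: in that case no larger t works, so x^m separates the two ideals;
    otherwise the finitely many strict inequalities leave room to raise r, so the
    two ideals share their generators. *)
From HB Require Import structures.
From mathcomp Require Import all_boot all_order all_algebra.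
From mathcomp Require Import reals.
From mathcomp Require Import mpoly.
From Stdlib Require Import Classical FunctionalExtensionality.

Set Implicit Arguments.
Unset Strict Implicit.
Unset Printing Implicit Defensive.
Import Order.TTheory GRing.Theory Num.Theory.
Local Open Scope ring_scope.

Section IdealGen.
Variables (K : fieldType) (d : nat).

Lemma ideal_gen0 (G : {mpoly K[d]} -> Prop) : ideal_gen G 0.
Proof. by move=> J [J0 _ _]. Qed.

Lemma ideal_genD (G : {mpoly K[d]} -> Prop) p q :
  ideal_gen G p -> ideal_gen G q -> ideal_gen G (p + q).
Proof.
move=> Gp Gq J idealJ GJ; have [_ JD _] := idealJ.
by apply: JD; [apply: Gp | apply: Gq].
Qed.

Lemma ideal_genMl (G : {mpoly K[d]} -> Prop) p q :
  ideal_gen G q -> ideal_gen G (p * q).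
Proof.
move=> Gq J idealJ GJ; have [_ _ JM] := idealJ.
by apply: JM; apply: Gq.
Qed.

Lemma ideal_gen_is_ideal (G : {mpoly K[d]} -> Prop) : is_ideal (ideal_gen G).
Proof.
by split; [apply: ideal_gen0 | apply: ideal_genD | apply: ideal_genMl].
Qed.

Lemma ideal_gen_generator (G : {mpoly K[d]} -> Prop) g : G g -> ideal_gen G g.
Proof. by move=> Gg J _; apply. Qed.

(* The polynomials with no monomial dividing x^m form an ideal missing x^m. *)
Lemma ideal_gen_monomial (S : 'X_{1..d} -> Prop) (m : 'X_{1..d}) :
  ideal_gen (fun q : {mpoly K[d]} => exists2 b, S b & q = 'X_[b]) 'X_[m] ->
  exists2 b, S b & forall j, (b j <= m j)%N.
Proof.
move=> Xm; apply: NNPP => noS.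
pose J (q : {mpoly K[d]}) :=
  forall u : 'X_{1..d}, (forall j, u j <= m j)%N -> q@_u = 0.
have /(_ m (fun j => leqnn _)) : J 'X_[m].
  apply: Xm => [|_ [b Sb ->] u um]; last first.
    by rewrite mcoeffX; case: eqP => // bu; case: noS; exists b; rewrite // bu.
  split.
  - by move=> u _; rewrite mcoeff0.
  - by move=> p q Jp Jq u um; rewrite mcoeffD Jp // Jq // addr0.
  - move=> p q Jq u um; rewrite mcoeffM; apply: big1 => uu /eqP uuE.
    rewrite Jq ?mulr0 // => j; apply: leq_trans (um j).
    by have := mnmDE j uu.1 uu.2; rewrite -uuE => ->; apply: leq_addl.
by rewrite mcoeffX eqxx => /eqP; rewrite oner_eq0.
Qed.

End IdealGen.

Lemma exists_gt_forall (R : realDomainType) (T : finType) (r : R)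
    (P : T -> R -> Prop) :
  (forall k t t', r < t' -> t' <= t -> P k t -> P k t') ->
  (forall k, exists2 t, r < t & P k t) ->
  exists2 t, r < t & forall k, P k t.
Proof.
move=> Pdown Pex.
suff [t rt Pt] : exists2 t, r < t & forall k, k \in enum T -> P k t.
  by exists t => // k; apply: Pt; rewrite mem_enum.
elim: (enum T) => [|k l [t rt Pt]]; first by exists (r + 1); rewrite ?ltrDl.
have [tk rtk Ptk] := Pex k.
exists (Num.min t tk) => [|k']; first by rewrite lt_min rt.
have rmin : r < Num.min t tk by rewrite lt_min rt.
rewrite inE => /predU1P [-> | /Pt Pk'].
  by apply: (Pdown _ tk) => //; rewrite ge_min lexx orbT.
by apply: (Pdown _ t) => //; rewrite ge_min lexx.
Qed.

Section ScaledPolyhedron.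
Variables (R : realType) (d s : nat) (a : 'I_s -> 'I_d -> nat) (c : 'I_s -> nat).

Lemma dotr_scale (u x : 'I_d -> R) t : dotr u (fun j => t * x j) = t * dotr u x.
Proof. by rewrite /dotr mulr_sumr; apply: eq_bigr => j _; rewrite mulrCA. Qed.

Lemma dotr_ge0 (u x : 'I_d -> R) :
  (forall j, 0 <= u j) -> (forall j, 0 <= x j) -> 0 <= dotr u x.
Proof. by move=> u0 x0; apply: sumr_ge0 => j _; apply: mulr_ge0. Qed.

Lemma ler_dotr (u x y : 'I_d -> R) :
  (forall j, 0 <= u j) -> (forall j, x j <= y j) -> dotr u x <= dotr u y.
Proof. by move=> u0 xy; apply: ler_sum => j _; apply: ler_wpM2l. Qed.

Lemma nat_vec_ge0 (v : 'I_d -> nat) j : 0 <= nat_vec R v j.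
Proof. exact: ler0n. Qed.

Lemma scaled_NP_le_scale (t t' : R) x :
  t' <= t -> scaled_NP a c t x -> scaled_NP a c t' x.
Proof.
move=> t't [x0 xc]; split=> // k; apply: le_trans (xc k).
by apply: ler_wpM2r; rewrite ?ler0n.
Qed.

Lemma scaled_NP_le_point (t : R) x y :
  (forall j, x j <= y j) -> scaled_NP a c t x -> scaled_NP a c t y.
Proof.
move=> xy [x0 xc]; split=> [j | k]; first exact: le_trans (x0 j) (xy j).
by apply: le_trans (xc k) _; apply: ler_dotr => // j; apply: nat_vec_ge0.
Qed.

Lemma scaled_NP_gt (r : R) x :
  scaled_NP a c r x ->
  (forall k, c k != 0%N -> r * (c k)%:R < dotr (nat_vec R (a k)) x) ->
  exists2 t, r < t & scaled_NP a c t x.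
Proof.
move=> [x0 _] strict.
have [t rt tc] : exists2 t, r < t &
    forall k, t * (c k)%:R <= dotr (nat_vec R (a k)) x.
  apply: exists_gt_forall => [k t t' _ t't | k].
    by apply: le_trans; apply: ler_wpM2r; rewrite ?ler0n.
  have [ck0 | ck] := eqVneq (c k) 0%N.
    exists (r + 1); rewrite ?ltrDl // ck0 mulr0.
    by apply: dotr_ge0 => // j; apply: nat_vec_ge0.
  have ck_gt0 : 0 < (c k)%:R :> R by rewrite ltr0n lt0n.
  exists (dotr (nat_vec R (a k)) x / (c k)%:R).
    by rewrite ltr_pdivlMr // strict.
  by rewrite divfK ?gt_eqF.
by exists t.
Qed.

End ScaledPolyhedron.

Lemma facet_polyhedron_nonempty (R : realType) (d : nat)
    (P F : ('I_d -> R) -> Prop) :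
  is_facet P F -> exists x, P x.
Proof. by move=> [_ [k [[[pts Ppts _] _] _]]]; exists (pts ord0). Qed.

Lemma dilate0_exp_vec0 (R : realType) (d : nat) (P : ('I_d -> R) -> Prop) :
  (exists y, P y) -> dilate 0 P (exp_vec R (0%MM : 'X_{1..d})).
Proof. by move=> [y Py]; exists y => // j; rewrite /exp_vec mnm0E mul0r. Qed.

Lemma exp_vec_multinom (R : realType) (d : nat) (p : 'I_d -> nat) :
  exp_vec R [multinom p j | j < d] = nat_vec R p.
Proof. by apply: functional_extensionality => j; rewrite /exp_vec mnmE. Qed.

Section RealPowers.
Variables (R : realType) (K : fieldType) (d : nat) (I : {mpoly K[d]} -> Prop).
Variables (s : nat) (a : 'I_s -> 'I_d -> nat) (c : 'I_s -> nat).
Hypothesis hNP : forall x : 'I_d -> R, NP R I x <->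
  ((forall j, 0 <= x j) /\ (forall i, (c i)%:R <= dotr (nat_vec R (a i)) x)).

Lemma dilate_NP_scaled (t : R) x :
  0 <= t -> dilate t (NP R I) x -> scaled_NP a c t x.
Proof.
move=> t0 [y /hNP [y0 yc] xy].
have -> : x = (fun j => t * y j) by apply: functional_extensionality.
split=> [j | k]; first exact: mulr_ge0.
by rewrite dotr_scale; apply: ler_wpM2l.
Qed.

Lemma scaled_dilate_NP (t : R) x :
  0 < t -> scaled_NP a c t x -> dilate t (NP R I) x.
Proof.
move=> t0 [x0 xc]; exists (fun j => t^-1 * x j) => [|j]; last first.
  by rewrite mulrA divff ?mul1r ?gt_eqF.
apply/hNP; split=> [j | k]; first by rewrite mulr_ge0 // invr_ge0 ltW.
by rewrite dotr_scale ler_pdivlMl //; apply: xc.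
Qed.

Lemma real_pow_antimono (t t' : R) :
  0 <= t' -> t' <= t -> forall p, real_pow I t p -> real_pow I t' p.
Proof.
move=> t'0 t't p; apply; first exact: ideal_gen_is_ideal.
move=> _ [m mt ->].
move: t'0; rewrite le_eqVlt => /predU1P [<- | t'0].
  (* 0 NP(I) = {0}, so 1 = x^0 is a generator *)
  rewrite -(mulr1 'X_[m]) -mpolyX0.
  apply: ideal_genMl; apply: ideal_gen_generator.
  exists 0%MM => //; apply: dilate0_exp_vec0.
  by case: mt => y NPy _; exists y.
apply: ideal_gen_generator; exists m => //.
apply/scaled_dilate_NP/(scaled_NP_le_scale t't) => //.
by apply: dilate_NP_scaled mt; apply: le_trans t't; apply: ltW.
Qed.

Lemma real_pow_gt_sub (r : R) :
  0 <= r -> forall p, real_pow_gt I r p -> real_pow I r p.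
Proof. by move=> r0 p [t rt]; apply: real_pow_antimono => //; apply: ltW. Qed.

Lemma real_pow_gt_is_ideal (r : R) : 0 <= r -> is_ideal (real_pow_gt I r).
Proof.
move=> r0; split.
- by exists (r + 1); rewrite ?ltrDl //; apply: ideal_gen0.
- move=> p q [t1 rt1 p1] [t2 rt2 q2].
  have rmin : r < Num.min t1 t2 by rewrite lt_min rt1.
  have min0 : 0 <= Num.min t1 t2 by apply: le_trans (ltW rmin).
  exists (Num.min t1 t2) => //; apply: ideal_genD.
    by apply: (real_pow_antimono min0) p1; rewrite ge_min lexx.
  by apply: (real_pow_antimono min0) q2; rewrite ge_min lexx orbT.
- by move=> p q [t rt q1]; exists t => //; apply: ideal_genMl.
Qed.

Lemma real_pow_sub_gt (r : R) :
  0 <= r ->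
  ~ (exists i, c i != 0%N /\
       exists p : 'I_d -> nat, scaled_facet a c r i (nat_vec R p)) ->
  forall p, real_pow I r p -> real_pow_gt I r p.
Proof.
move=> r0 no_point p; apply; first exact: real_pow_gt_is_ideal.
move=> _ [m mr ->].
have rm := dilate_NP_scaled r0 mr.
have [t rt mt] : exists2 t, r < t & scaled_NP a c t (exp_vec R m).
  apply: (scaled_NP_gt rm) => k ck.
  rewrite lt_neqAle rm.2 andbT; apply/eqP => facet; apply: no_point.
  by exists k; split=> //; exists (fun j => m j).
exists t => //; apply: ideal_gen_generator; exists m => //.
by apply: scaled_dilate_NP mt; apply: le_lt_trans rt.
Qed.

Lemma monomial_notin_real_pow_gt (r : R) i (m : 'X_{1..d}) :
  0 <= r -> c i != 0%N ->
  dotr (nat_vec R (a i)) (exp_vec R m) = r * (c i)%:R ->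
  ~ real_pow_gt I r 'X_[m].
Proof.
move=> r0 ci mi [t rt /ideal_gen_monomial [b bt bm]].
have tb := dilate_NP_scaled (le_trans r0 (ltW rt)) bt.
have [_ /(_ i)] : scaled_NP a c t (exp_vec R m).
  by apply: scaled_NP_le_point tb => j; rewrite ler_nat.
by rewrite mi ler_pM2r ?ltr0n ?lt0n // leNgt rt.
Qed.

Lemma jumping_number_of_facet_point (r : R) i (p : 'I_d -> nat) :
  0 <= r -> c i != 0%N -> (exists y, NP R I y) ->
  dotr (nat_vec R (a i)) (nat_vec R p) = r * (c i)%:R ->
  (forall k, k != i -> r * (c k)%:R <= dotr (nat_vec R (a k)) (nat_vec R p)) ->
  jumping_number I r.
Proof.
move=> r0 ci NP_nonempty pi pk; split=> // same_ideals.
have [m rm mi] : exists2 m : 'X_{1..d},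
    real_pow I r 'X_[m] & dotr (nat_vec R (a i)) (exp_vec R m) = r * (c i)%:R.
  move: r0 pi pk; rewrite le_eqVlt => /predU1P [<- _ _ | r0 pi pk].
    exists 0%MM; last first.
      by rewrite mul0r; apply: big1 => j _; rewrite /exp_vec mnm0E mulr0.
    apply: ideal_gen_generator; exists 0%MM => //.
    exact: dilate0_exp_vec0.
  exists [multinom p j | j < d]; last by rewrite exp_vec_multinom.
  apply: ideal_gen_generator; exists [multinom p j | j < d] => //.
  rewrite exp_vec_multinom; apply: scaled_dilate_NP => //.
  split=> [j | k]; first exact: nat_vec_ge0.
  by have [-> | /pk //] := eqVneq k i; rewrite pi.
by apply: monomial_notin_real_pow_gt r0 ci mi _; apply/same_ideals.
Qed.

End RealPowers.

Theorem proposition5p8 (R : realType) (K : fieldType) (d : nat)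
  (I : {mpoly K[d]} -> Prop) (s : nat)
  (a : 'I_s -> 'I_d -> nat) (c : 'I_s -> nat)
  (hI : monomial_ideal I)
  (hNP : forall x : 'I_d -> R, NP R I x <->
          ((forall j, 0 <= x j) /\
           (forall i, (c i)%:R <= dotr (nat_vec R (a i)) x)))
  (hgcd : forall i, gcdn (\big[gcdn/0%N]_(j < d) a i j) (c i) = 1%N)
  (hfacet : forall i, is_facet (NP R I)
              (fun x => NP R I x /\ dotr (nat_vec R (a i)) x = (c i)%:R))
  (hall : forall F, is_facet (NP R I) F ->
            exists i, forall x, F x <->
              (NP R I x /\ dotr (nat_vec R (a i)) x = (c i)%:R))
  (r : R) (hr : 0 <= r) :
  [<-> jumping_number I r;
       exists i, (c i != 0%N) /\
         exists p : 'I_d -> nat, scaled_facet a c r i (nat_vec R p);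
       exists i, (c i != 0%N) /\
         exists p : 'I_d -> nat,
           dotr (nat_vec R (a i)) (nat_vec R p) = r * (c i)%:R /\
           forall k, k != i ->
             r * (c k)%:R <= dotr (nat_vec R (a k)) (nat_vec R p)].
Proof.
(* Of the hypotheses on the H-description only hNP, and the nonemptiness of
   NP(I) that hfacet provides, are needed. *)
tfae.
- move=> [_ jump]; apply: NNPP => no_point; apply: jump => p; split.
    exact: (real_pow_sub_gt hNP hr no_point (p := p)).
  exact: (real_pow_gt_sub hNP hr (p := p)).
- by move=> [i [ci [p [[_ pk] pi]]]]; exists i; split=> //; exists p.
- move=> [i [ci [p [pi pk]]]].
  have NP_nonempty := facet_polyhedron_nonempty (hfacet i).
  exact: (jumping_number_of_facet_point hNP hr ci NP_nonempty pi pk).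
Qed.
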